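(* Let $h=0$, let $f$ satisfy Assumption A2(i), assume $a_{ij}\neq0$ for every pair $i\ne j$, and let $f^*=\inf\{f(x):a^Tx=b\}>-\infty$. Let $(p_{ij})$ be any probability distribution on ordered pairs with $p_{ij}=p_{ji}>0$ for $i\neq j$ and $p_{ii}=0$, and let $x^k$ be generated by Algorithm (2-RCD) with $h=0$ and pairs drawn i.i.d. according to $p_{ij}$. Let $Q=\sum_{i\ne j}\frac{p_{ij}}{L_{ij}}Q_{ij}$ and let $\nu_2(Q)$ be the second smallest eigenvalue of $Q$, assumed positive. Then for all $k\ge0$, $$\min_{0\le l\le k}E\left[\left(M_3(x^l,\mathbf 1)\right)^2\right]\le\frac{2\,(f(x^0)-f^* )}{\nu_2(Q)\,(k+1)}.$$
   Context: Block structure: $n=\sum_{i=1}^N n_i$ with $N\ge2$, $I_n=[U_1\ \dots\ U_N]$, $\nabla_if(x)=U_i^T\nabla f(x)$, $a_i=U_i^Ta$, $a_{ij}=[a_i^T\ a_j^T]^T$, $\nabla_{ij}f(x)=[\nabla_if(x)^T\ \nabla_jf(x)^T]^T$, $U_{ij}=[U_i\ U_j]\in\mathbb{R}^{n\times(n_i+n_j)}$. Problem: $\min\{f(x): a^Tx=b\}$ with $a\in\mathbb{R}^n$ nonzero. Assumption A2(i): $f$ is differentiable and there are constants $L_{ij}=L_{ji}>0$ with $\|\nabla_{ij}f(x+U_is_i+U_js_j)-\nabla_{ij}f(x)\|\le L_{ij}\|[s_i^T\ s_j^T]^T\|$ for all $s_i,s_j$, $x$. Algorithm (2-RCD) with $h=0$: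 given $x^0$ with $a^Tx^0=b$, for $k\ge0$ choose a random pair $(i,j)=(i_k,j_k)$, $i\ne j$, and set $x^{k+1}=x^k+U_{ij}d_{ij}$ where $d_{ij}=\arg\min\{\langle\nabla_{ij}f(x^k),s\rangle+\frac{L_{ij}}2\|s\|^2: a_{ij}^Ts=0\}=-\frac1{L_{ij}}\big(I-\frac{a_{ij}a_{ij}^T}{a_{ij}^Ta_{ij}}\big)\nabla_{ij}f(x^k)$. $Q_{ij}=U_{ij}\big(I_{n_i+n_j}-\frac{a_{ij}a_{ij}^T}{a_{ij}^Ta_{ij}}\big)U_{ij}^T\in\mathbb{R}^{n\times n}$ (symmetric positive semidefinite, $Q_{ij}a=0$). For feasible $x$, $\nabla f(x)_\perp$ denotes the orthogonal projection of $\nabla f(x)$ onto $S=\{s:a^Ts=0\}$, and $M_3(x,\mathbf 1)=\|\nabla f(x)_\perp\|$ (Euclidean norm). *)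

(* classical real numbers. Vectors in R^n are functions
   nat -> R, of which only the coordinates 0..n-1 are meaningful. *)
From Stdlib Require Import Reals Lra.
Open Scope R_scope.

Definition vec := nat -> R.

Fixpoint fsum (n : nat) (F : nat -> R) : R :=
  match n with
  | O => 0
  | S m => fsum m F + F m
  end.

Definition dot (n : nat) (x y : vec) : R := fsum n (fun k => x k * y k).
Definition norm (n : nat) (x : vec) : R := sqrt (dot n x x).
Definition vsub (x y : vec) : vec := fun k => x k - y k.
Definition vadd (x y : vec) : vec := fun k => x k + y k.

(* Block structure: coordinate k < n belongs to block blk k < N; blocks are
   consecutive (blk nondecreasing) and nonempty, i.e. I_n = [U_1 ... U_N]. *)
Definition block_structure (n N : nat) (blk : nat -> nat) : Prop :=
  (2 <= N)%nat /\
  (forall k, (k < n)%nat -> (blk k < N)%nat) /\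
  (forall i, (i < N)%nat -> exists k, (k < n)%nat /\ blk k = i) /\
  (forall k l, (k <= l)%nat -> (l < n)%nat -> (blk k <= blk l)%nat).

Definition inpair (blk : nat -> nat) (i j k : nat) : bool :=
  orb (Nat.eqb (blk k) i) (Nat.eqb (blk k) j).

(* U_ij U_ij^T v : keep the coordinates of blocks i, j, zero elsewhere.
   Thus norm n (proj blk i j v) = || v_ij ||. *)
Definition proj (blk : nat -> nat) (i j : nat) (v : vec) : vec :=
  fun k => if inpair blk i j k then v k else 0.

Definition has_gradient (n : nat) (f : vec -> R) (g : vec -> vec) : Prop :=
  forall x eps, 0 < eps -> exists delta, 0 < delta /\
    forall y, norm n (vsub y x) < delta ->
      Rabs (f y - f x - dot n (g x) (vsub y x)) <= eps * norm n (vsub y x).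

Definition assumption_A2i (n N : nat) (blk : nat -> nat)
    (f : vec -> R) (g : vec -> vec) (L : nat -> nat -> R) : Prop :=
  has_gradient n f g /\
  (forall i j, (i < N)%nat -> (j < N)%nat -> i <> j ->
     L i j = L j i /\ 0 < L i j) /\
  (forall i j, (i < N)%nat -> (j < N)%nat -> i <> j ->
     forall x s, (forall k, inpair blk i j k = false -> s k = 0) ->
       norm n (proj blk i j (vsub (g (vadd x s)) (g x)))
         <= L i j * norm n s).

(* One step of (2-RCD) with h = 0 on pair (i,j):
   x+ = x + U_ij d_ij,  d_ij = -(1/L_ij) (I - a_ij a_ij^T/(a_ij^T a_ij)) grad_ij f(x). *)
Definition rcd_step (n : nat) (blk : nat -> nat) (g : vec -> vec)
    (L : nat -> nat -> R) (a : vec) (x : vec) (i j : nat) : vec :=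
  let gp := proj blk i j (g x) in
  let ap := proj blk i j a in
  let c := dot n ap gp / dot n ap ap in
  fun k => x k + (- / L i j) * (gp k - c * ap k).

(* E[F(x^l)] where x^l is produced from x by l steps of (2-RCD) with the
   pairs drawn i.i.d. with probabilities p i j (finite sum over outcomes). *)
Fixpoint expect (n N : nat) (blk : nat -> nat) (g : vec -> vec)
    (L : nat -> nat -> R) (a : vec) (p : nat -> nat -> R)
    (l : nat) (F : vec -> R) (x : vec) : R :=
  match l with
  | O => F x
  | S l' => fsum N (fun i => fsum N (fun j =>
              p i j * expect n N blk g L a p l' F (rcd_step n blk g L a x i j)))
  end.

(* M_3(x, 1) = || grad f(x)_perp ||, projection onto {s : a^T s = 0}. *)
Definition M3 (n : nat) (g : vec -> vec) (a : vec) (x : vec) : R :=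
  let c := dot n a (g x) / dot n a a in
  norm n (fun k => g x k - c * a k).

(* Entries of Q_ij = U_ij (I - a_ij a_ij^T/(a_ij^T a_ij)) U_ij^T. *)
Definition Qij (n : nat) (blk : nat -> nat) (a : vec) (i j : nat)
    (k l : nat) : R :=
  if andb (inpair blk i j k) (inpair blk i j l) then
    (if Nat.eqb k l then 1 else 0)
      - a k * a l / dot n (proj blk i j a) (proj blk i j a)
  else 0.

Definition Qmat (n N : nat) (blk : nat -> nat) (a : vec)
    (p L : nat -> nat -> R) (k l : nat) : R :=
  fsum N (fun i => fsum N (fun j =>
    if Nat.eqb i j then 0 else p i j / L i j * Qij n blk a i j k l)).

(* nu is the second smallest eigenvalue (counted with multiplicity) of the
   symmetric n x n matrix M: M has an orthonormal eigenbasis V_0..V_{n-1}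
   with eigenvalues lam_0 <= ... <= lam_{n-1}, and nu = lam_1. *)
Definition second_smallest_eigenvalue (n : nat) (M : nat -> nat -> R)
    (nu : R) : Prop :=
  (2 <= n)%nat /\
  exists (lam : nat -> R) (V : nat -> vec),
    (forall m m', (m < n)%nat -> (m' < n)%nat ->
       dot n (V m) (V m') = if Nat.eqb m m' then 1 else 0) /\
    (forall m k, (m < n)%nat -> (k < n)%nat ->
       fsum n (fun l => M k l * V m l) = lam m * V m k) /\
    (forall m m', (m <= m')%nat -> (m' < n)%nat -> lam m <= lam m') /\
    nu = lam 1%nat.

From Stdlib Require Import Reals Lra Lia FunctionalExtensionality.
From mathcomp Require ssreflect ssrbool ssrnat bigop ssralg matrix Rstruct.
Open Scope R_scope.
Set Bullet Behavior "Strict Subproofs".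

(* Proof.  (1) Block descent lemma: the Lipschitz bound of Assumption A2(i)
   and the mean value theorem give f(x + s) <= f(x) + <grad f(x), s> + L_ij/2 |s|^2
   for s supported on blocks i, j.  (2) For the (2-RCD) direction d_ij this
   yields f(x+) <= f(x) - v^T Q_ij v / (2 L_ij) with v = grad f(x)_perp (Q_ij
   annihilates a, so the projection onto a^perp is free), and a^T x+ = a^T x.
   (3) Averaging over the random pair: E f(x+) <= f(x) - v^T Q v / 2.
   (4) Spectral bound: Q a = 0 and a <> 0, so in an orthonormal eigenbasis a
   lies along the first eigenvector and v^T Q v >= nu_2(Q) |v|^2 for v _|_ a;
   hence E f(x+) <= f(x) - nu_2(Q)/2 M_3(x, 1)^2.  (5) Telescoping this along
   the random iterates bounds nu_2(Q)/2 sum_{l<=k} E[M_3(x^l, 1)^2] by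
   f(x^0) - f^star, and the minimum is at most the average. *)

Lemma fsum_ext n F G :
  (forall k, (k < n)%nat -> F k = G k) -> fsum n F = fsum n G.
Proof.
  induction n as [|n IH]; intros H; simpl; auto.
  rewrite IH, (H n); [reflexivity | lia | intros; apply H; lia].
Qed.

Lemma fsum_add n F G : fsum n (fun k => F k + G k) = fsum n F + fsum n G.
Proof. induction n; simpl; [ring | rewrite IHn; ring]. Qed.

Lemma fsum_scal n c F : fsum n (fun k => c * F k) = c * fsum n F.
Proof. induction n; simpl; [ring | rewrite IHn; ring]. Qed.

Lemma fsum_mul_r n F c : fsum n F * c = fsum n (fun k => F k * c).
Proof. rewrite Rmult_comm, <- fsum_scal. apply fsum_ext; intros; ring. Qed.

Lemma fsum_lin2 n al be F G :
  fsum n (fun k => al * F k + be * G k) = al * fsum n F + be * fsum n G.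
Proof. now rewrite fsum_add, !fsum_scal. Qed.

Lemma fsum_lin3 n al be ga F G H :
  fsum n (fun k => al * F k + be * G k + ga * H k)
  = al * fsum n F + be * fsum n G + ga * fsum n H.
Proof. now rewrite !fsum_add, !fsum_scal. Qed.

Lemma fsum_zero n F : (forall k, (k < n)%nat -> F k = 0) -> fsum n F = 0.
Proof.
  induction n as [|n IH]; intros H; simpl; [reflexivity|].
  rewrite IH, H; [ring | lia | intros; apply H; lia].
Qed.

Lemma fsum_le n F G :
  (forall k, (k < n)%nat -> F k <= G k) -> fsum n F <= fsum n G.
Proof.
  induction n as [|n IH]; intros H; simpl; [lra|].
  apply Rplus_le_compat; [apply IH; intros; apply H; lia | apply H; lia].
Qed.

Lemma fsum_nonneg n F : (forall k, (k < n)%nat -> 0 <= F k) -> 0 <= fsum n F.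
Proof.
  intros H. rewrite <- (fsum_zero n (fun _ => 0)) by auto. now apply fsum_le.
Qed.

Lemma fsum_swap n m F :
  fsum n (fun i => fsum m (fun j => F i j)) = fsum m (fun j => fsum n (fun i => F i j)).
Proof.
  induction n as [|n IH]; simpl.
  - symmetry; now apply fsum_zero.
  - now rewrite IH, <- fsum_add.
Qed.

Lemma fsum_delta n k F :
  (k < n)%nat -> fsum n (fun l => if Nat.eqb k l then F l else 0) = F k.
Proof.
  induction n as [|n IH]; intros Hk; [lia|]. simpl.
  destruct (Nat.eqb_spec k n) as [->|Hne].
  - rewrite fsum_zero; [ring|]. intros l Hl.
    destruct (Nat.eqb_spec n l); [lia | reflexivity].
  - rewrite IH by lia. ring.
Qed.

Lemma fsum_ge_term n F k :
  (forall l, (l < n)%nat -> 0 <= F l) -> (k < n)%nat -> F k <= fsum n F.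
Proof.
  induction n as [|n IH]; intros H Hk; [lia|]. simpl.
  destruct (Nat.eq_dec k n) as [->|Hne].
  - pose proof (fsum_nonneg n F ltac:(intros; apply H; lia)). lra.
  - pose proof (IH ltac:(intros; apply H; lia) ltac:(lia)). pose proof (H n ltac:(lia)). lra.
Qed.

Lemma fsum_shift k F : fsum (S k) F = F 0%nat + fsum k (fun l => F (S l)).
Proof. induction k; simpl in *; [ring | rewrite IHk; ring]. Qed.

Lemma fsum_ge_min k F l :
  (forall l', (l' < k)%nat -> F l <= F l') -> INR k * F l <= fsum k F.
Proof.
  intros H. replace (INR k * F l) with (fsum k (fun _ => F l)).
  - now apply fsum_le.
  - clear H. induction k; simpl fsum; [simpl; ring|]. rewrite IHk, S_INR. ring.
Qed.

Lemma exists_argmin (F : nat -> R) k :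
  exists l, (l <= k)%nat /\ forall l', (l' <= k)%nat -> F l <= F l'.
Proof.
  induction k as [|k [l [Hl Hmin]]].
  - exists 0%nat. split; [lia|]. intros l' H. replace l' with 0%nat by lia. lra.
  - destruct (Rle_or_lt (F l) (F (S k))).
    + exists l. split; [lia|]. intros l' H'.
      destruct (Nat.eq_dec l' (S k)) as [->|]; [assumption | apply Hmin; lia].
    + exists (S k). split; [lia|]. intros l' H'.
      destruct (Nat.eq_dec l' (S k)) as [->|]; [lra|]. pose proof (Hmin l' ltac:(lia)). lra.
Qed.

Lemma fsum2_le N F G :
  (forall i j, (i < N)%nat -> (j < N)%nat -> F i j <= G i j) ->
  fsum N (fun i => fsum N (fun j => F i j)) <= fsum N (fun i => fsum N (fun j => G i j)).
Proof. intros H. apply fsum_le; intros i Hi. apply fsum_le; intros j Hj. auto. Qed.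

Lemma fsum2_lin2 N al be F G :
  fsum N (fun i => fsum N (fun j => al * F i j + be * G i j)) =
  al * fsum N (fun i => fsum N (fun j => F i j))
  + be * fsum N (fun i => fsum N (fun j => G i j)).
Proof.
  rewrite <- fsum_lin2. apply fsum_ext; intros. apply fsum_lin2.
Qed.

Lemma fsum2_scal N c F :
  fsum N (fun i => fsum N (fun j => c * F i j)) = c * fsum N (fun i => fsum N (fun j => F i j)).
Proof. rewrite <- fsum_scal. apply fsum_ext; intros. apply fsum_scal. Qed.

Lemma fsum_fsum2_swap K N H :
  fsum K (fun l => fsum N (fun i => fsum N (fun j => H l i j))) =
  fsum N (fun i => fsum N (fun j => fsum K (fun l => H l i j))).
Proof. rewrite fsum_swap. apply fsum_ext; intros. apply fsum_swap. Qed.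

Lemma dot_sym n u v : dot n u v = dot n v u.
Proof. apply fsum_ext; intros; ring. Qed.

Lemma dot_nonneg n u : 0 <= dot n u u.
Proof. apply fsum_nonneg. intros. apply Rle_0_sqr. Qed.

Lemma dot_pos n u k : (k < n)%nat -> u k <> 0 -> 0 < dot n u u.
Proof.
  intros Hk Hu. apply Rlt_le_trans with (u k * u k).
  - now apply Rsqr_pos_lt.
  - apply (fsum_ge_term n (fun k => u k * u k)); auto. intros; apply Rle_0_sqr.
Qed.

Lemma norm_nonneg n s : 0 <= norm n s.
Proof. apply sqrt_pos. Qed.

Lemma norm_sq n s : norm n s * norm n s = dot n s s.
Proof. apply sqrt_sqrt, dot_nonneg. Qed.

Lemma norm_scal n h s : norm n (fun k => h * s k) = Rabs h * norm n s.
Proof.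
  unfold norm. replace (dot n (fun k => h * s k) (fun k => h * s k)) with ((h * h) * dot n s s).
  - rewrite sqrt_mult_alt, <- sqrt_Rsqr_abs by apply Rle_0_sqr. reflexivity.
  - unfold dot. rewrite <- fsum_scal. apply fsum_ext; intros; ring.
Qed.

(* Cauchy-Schwarz, from the nonnegativity of the quadratic t |-> |u - t v|^2. *)
Lemma cauchy_schwarz n u v : dot n u v <= norm n u * norm n v.
Proof.
  set (A := dot n u u). set (B := dot n u v). set (C := dot n v v).
  assert (Hq : forall t, 0 <= A - 2 * t * B + t * t * C).
  { intro t.
    assert (E : dot n (fun k => u k - t * v k) (fun k => u k - t * v k)
                = A - 2 * t * B + t * t * C).
    { unfold A, B, C, dot.
      rewrite (fsum_ext n (fun k => (u k - t * v k) * (u k - t * v k))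
                 (fun k => 1 * (u k * u k) + (-2 * t) * (u k * v k) + (t * t) * (v k * v k)))
        by (intros; ring).
      rewrite fsum_lin3. ring. }
    rewrite <- E.
    apply dot_nonneg. }
  assert (HA : 0 <= A) by apply dot_nonneg. assert (HC : 0 <= C) by apply dot_nonneg.
  unfold norm. fold A C. rewrite <- sqrt_mult_alt by exact HA.
  destruct (Rle_or_lt B 0) as [HB|HB]; [pose proof (sqrt_pos (A * C)); lra|].
  assert (HBC : B * B <= A * C).
  { destruct (Req_dec C 0) as [HC0|HC0].
    - exfalso. pose proof (Hq (A / B + 1)) as H. rewrite HC0 in H.
      replace (2 * (A / B + 1) * B) with (2 * A + 2 * B) in H by (field; lra). lra.
    - pose proof (Hq (B / C)) as H.
      replace (A - 2 * (B / C) * B + B / C * (B / C) * C) with ((A * C - B * B) / C) in H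
        by (field; lra).
      apply Rmult_le_compat_r with (r := C) in H; [|lra].
      replace ((A * C - B * B) / C * C) with (A * C - B * B) in H by (field; lra). lra. }
  rewrite <- (sqrt_Rsqr B) by lra. apply sqrt_le_1_alt. unfold Rsqr. lra.
Qed.

Lemma line_derivative n f g x s t :
  has_gradient n f g ->
  derivable_pt_lim (fun t => f (fun k => x k + t * s k)) t
                   (dot n (g (fun k => x k + t * s k)) s).
Proof.
  intros Hg eps Heps. set (y0 := fun k => x k + t * s k).
  set (ns := norm n s). assert (Hns : 0 <= ns) by apply norm_nonneg.
  destruct (Hg y0 (eps / (ns + 1))) as [delta [Hd Hy]].
  { apply Rdiv_lt_0_compat; lra. }
  assert (Hd' : 0 < delta / (ns + 1)) by (apply Rdiv_lt_0_compat; lra).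
  exists (mkposreal _ Hd'). intros h Hh0 Hh. simpl in Hh.
  set (y := fun k => x k + (t + h) * s k).
  assert (Hn : norm n (vsub y y0) = Rabs h * ns).
  { replace (vsub y y0) with (fun k => h * s k) by
      (unfold vsub, y, y0; apply functional_extensionality; intros; ring).
    apply norm_scal. }
  assert (Hlt : norm n (vsub y y0) < delta).
  { rewrite Hn. apply Rle_lt_trans with (Rabs h * (ns + 1)).
    - apply Rmult_le_compat_l; [apply Rabs_pos | lra].
    - apply Rmult_lt_reg_r with (/ (ns + 1)); [apply Rinv_0_lt_compat; lra|].
      replace (Rabs h * (ns + 1) * / (ns + 1)) with (Rabs h) by (field; lra). exact Hh. }
  specialize (Hy y Hlt). rewrite Hn in Hy.
  replace (dot n (g y0) (vsub y y0)) with (h * dot n (g y0) s) in Hy by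
    (unfold dot, vsub, y, y0; rewrite <- fsum_scal; apply fsum_ext; intros; ring).
  change (f (fun k => x k + (t + h) * s k)) with (f y).
  replace ((f y - f y0) / h - dot n (g y0) s)
    with ((f y - f y0 - h * dot n (g y0) s) / h) by (field; auto).
  assert (Hah : 0 < Rabs h) by (apply Rabs_pos_lt; auto).
  unfold Rdiv. rewrite Rabs_mult, Rabs_inv.
  apply Rmult_lt_reg_r with (Rabs h); auto.
  replace (Rabs (f y - f y0 - h * dot n (g y0) s) * / Rabs h * Rabs h)
    with (Rabs (f y - f y0 - h * dot n (g y0) s)) by (field; lra).
  eapply Rle_lt_trans; [exact Hy|].
  replace (eps / (ns + 1) * (Rabs h * ns)) with (eps * Rabs h * (ns / (ns + 1))) by (field; lra).
  rewrite <- (Rmult_1_r (eps * Rabs h)) at 2.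
  apply Rmult_lt_compat_l; [apply Rmult_lt_0_compat; lra|].
  apply Rmult_lt_reg_r with (ns + 1); [lra|].
  replace (ns / (ns + 1) * (ns + 1)) with ns by (field; lra). lra.
Qed.

Lemma quadratic_derivative (D0 c t : R) :
  derivable_pt_lim (fun t => D0 * t + c * (t * t)) t (D0 + c * (2 * t)).
Proof.
  pose proof (derivable_pt_lim_plus _ _ t _ _
    (derivable_pt_lim_scal id D0 t 1 (derivable_pt_lim_id t))
    (derivable_pt_lim_scal _ c t _
       (derivable_pt_lim_mult id id t 1 1 (derivable_pt_lim_id t) (derivable_pt_lim_id t))))
    as H.
  unfold plus_fct, mult_real_fct, mult_fct, id in H.
  replace (D0 + c * (2 * t)) with (D0 * 1 + c * (1 * t + t * 1)) by ring. exact H.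
Qed.

(* Descent lemma for a direction s supported on the blocks i, j: if the (i,j)
   part of the gradient is Lc-Lipschitz along the segment [x, x + s], then
   f(x + s) <= f(x) + <g(x), s> + Lc/2 |s|^2.  Proof: the mean value theorem
   applied to t |-> f(x + t s) - (<g(x), s> t + Lc/2 |s|^2 t^2) on [0, 1]. *)
Lemma block_descent n blk f g Lc i j x s :
  has_gradient n f g ->
  (forall k, inpair blk i j k = false -> s k = 0) ->
  (forall t, 0 <= t <= 1 ->
     norm n (proj blk i j (vsub (g (fun k => x k + t * s k)) (g x))) <= Lc * (t * norm n s)) ->
  f (vadd x s) <= f x + dot n (g x) s + Lc / 2 * dot n s s.
Proof.
  intros Hg Hs Hlip.
  set (D0 := dot n (g x) s). set (S := dot n s s). set (c := Lc / 2 * S).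
  set (psi := fun t => f (fun k => x k + t * s k) - (D0 * t + c * (t * t))).
  set (psi' := fun t => dot n (g (fun k => x k + t * s k)) s - (D0 + c * (2 * t))).
  assert (Hder : forall t, 0 <= t <= 1 -> derivable_pt_lim psi t (psi' t)).
  { intros t _. apply derivable_pt_lim_minus;
      [now apply line_derivative | apply quadratic_derivative]. }
  destruct (MVT_cor2 psi psi' 0 1 ltac:(lra) Hder) as [t0 [Hmvt Ht0]].
  assert (Hslope : psi' t0 <= 0).
  { set (y := fun k => x k + t0 * s k).
    set (dg := proj blk i j (vsub (g y) (g x))).
    (* s only sees the (i,j) part of the gradient increment *)
    assert (Hinc : dot n (g y) s - D0 = dot n dg s).
    { transitivity (fsum n (fun k => 1 * (g y k * s k) + (-1) * (g x k * s k))).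
      - rewrite fsum_lin2. unfold D0, dot. ring.
      - apply fsum_ext. intros k _. unfold dg, proj, vsub.
        destruct (inpair blk i j k) eqn:E; [ring | rewrite (Hs k E); ring]. }
    pose proof (cauchy_schwarz n dg s) as CS.
    pose proof (Hlip t0 ltac:(lra)) as Hl. fold y dg in Hl.
    pose proof (norm_nonneg n s). pose proof (norm_sq n s) as Hsq. fold S in Hsq.
    assert (norm n dg * norm n s <= Lc * (t0 * norm n s) * norm n s)
      by (apply Rmult_le_compat_r; auto).
    unfold psi', c. fold y. nra. }
  assert (E0 : psi 0 = f x).
  { unfold psi. replace (fun k => x k + 0 * s k) with x
      by (apply functional_extensionality; intros; ring). ring. }
  assert (E1 : psi 1 = f (vadd x s) - (D0 + c)).
  { unfold psi, vadd. replace (fun k => x k + 1 * s k) with (fun k => x k + s k)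
      by (apply functional_extensionality; intros; ring). ring. }
  unfold c in *. nra.
Qed.

Definition quad (n : nat) (M : nat -> nat -> R) (v : vec) : R :=
  fsum n (fun k => v k * fsum n (fun l => M k l * v l)).

Definition perp (n : nat) (g : vec -> vec) (a x : vec) : vec :=
  fun k => g x k - (dot n a (g x) / dot n a a) * a k.

Definition rcd_direction (n : nat) (blk : nat -> nat) (g : vec -> vec)
    (L : nat -> nat -> R) (a x : vec) (i j : nat) : vec :=
  let gp := proj blk i j (g x) in
  let ap := proj blk i j a in
  fun k => (- / L i j) * (gp k - (dot n ap gp / dot n ap ap) * ap k).

Lemma rcd_step_direction n blk g L a x i j :
  rcd_step n blk g L a x i j = vadd x (rcd_direction n blk g L a x i j).
Proof. reflexivity. Qed.

Section BlockPair.

Variables (n : nat) (blk : nat -> nat) (a : vec) (i j : nat).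

Lemma dot_proj_r u v : dot n u (proj blk i j v) = dot n (proj blk i j u) v.
Proof. apply fsum_ext; intros; unfold proj; destruct (inpair blk i j k); ring. Qed.

Lemma dot_proj_both u v :
  dot n (proj blk i j u) (proj blk i j v) = dot n (proj blk i j u) v.
Proof. apply fsum_ext; intros; unfold proj; destruct (inpair blk i j k); ring. Qed.

Lemma Qij_apply v k : (k < n)%nat ->
  fsum n (fun l => Qij n blk a i j k l * v l) =
  proj blk i j v k - proj blk i j a k *
    (dot n (proj blk i j a) v / dot n (proj blk i j a) (proj blk i j a)).
Proof.
  intros Hk. set (D := dot n (proj blk i j a) (proj blk i j a)).
  unfold Qij. fold D. destruct (inpair blk i j k) eqn:Ek; simpl.
  - rewrite (fsum_ext n _ (fun l => (if Nat.eqb k l then proj blk i j v l else 0)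
        + (- (a k / D)) * (proj blk i j a l * v l))).
    + rewrite fsum_add, fsum_delta, fsum_scal by exact Hk.
      replace (proj blk i j a k) with (a k) by (unfold proj; rewrite Ek; reflexivity).
      replace (proj blk i j v k) with (v k) by (unfold proj; rewrite Ek; reflexivity).
      unfold dot, Rdiv. ring.
    + intros l Hl. unfold proj. destruct (inpair blk i j l) eqn:El;
        destruct (Nat.eqb_spec k l); subst; unfold Rdiv; ring.
  - unfold proj at 1 2. rewrite Ek, fsum_zero; [ring | intros; ring].
Qed.

Hypothesis a_ij_nonzero : dot n (proj blk i j a) (proj blk i j a) <> 0.

Lemma Qij_kernel k : (k < n)%nat -> fsum n (fun l => Qij n blk a i j k l * a l) = 0.
Proof.
  intros Hk. rewrite Qij_apply, <- (dot_proj_both a a) by exact Hk.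
  field. exact a_ij_nonzero.
Qed.

Lemma quad_Qij v :
  quad n (Qij n blk a i j) v =
  dot n (proj blk i j v) (proj blk i j v)
  - dot n (proj blk i j a) v * dot n (proj blk i j a) v
    / dot n (proj blk i j a) (proj blk i j a).
Proof.
  set (ap := proj blk i j a). set (D := dot n ap ap). set (P := dot n ap v).
  unfold quad.
  rewrite (fsum_ext n _ (fun k => 1 * (proj blk i j v k * proj blk i j v k)
                                  + (- (P / D)) * (ap k * v k))).
  - rewrite fsum_lin2. unfold dot at 1. fold (dot n ap v) P. unfold Rdiv. ring.
  - intros k Hk. rewrite Qij_apply by exact Hk. fold ap D P.
    unfold ap, proj. destruct (inpair blk i j k); ring.
Qed.

Lemma quad_Qij_shift v t :
  quad n (Qij n blk a i j) (fun k => v k - t * a k) = quad n (Qij n blk a i j) v.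
Proof.
  rewrite !quad_Qij.
  set (ap := proj blk i j a). set (vp := proj blk i j v).
  assert (Ea : dot n ap (fun k => v k - t * a k) = dot n ap v - t * dot n ap ap).
  { unfold ap. rewrite (dot_proj_both a a). fold ap. unfold dot.
    rewrite (fsum_ext n _ (fun k => 1 * (ap k * v k) + (- t) * (ap k * a k)))
      by (intros; ring).
    rewrite fsum_lin2. ring. }
  assert (Ep : dot n (proj blk i j (fun k => v k - t * a k)) (proj blk i j (fun k => v k - t * a k))
               = dot n vp vp - 2 * t * dot n ap v + t * t * dot n ap ap).
  { unfold ap. rewrite <- (dot_proj_both a v). fold ap vp. rewrite (dot_sym n ap vp).
    unfold dot.
    rewrite (fsum_ext n _ (fun k => 1 * (vp k * vp k) + (-2 * t) * (vp k * ap k)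
                                    + (t * t) * (ap k * ap k))).
    - rewrite fsum_lin3. ring.
    - intros k _. unfold vp, ap, proj. destruct (inpair blk i j k); ring. }
  rewrite Ea, Ep. field. exact a_ij_nonzero.
Qed.

End BlockPair.

Section OneStep.

Variables (n N : nat) (blk : nat -> nat) (f : vec -> R) (g : vec -> vec)
  (L : nat -> nat -> R) (a : vec) (i j : nat) (x : vec).

Hypothesis a_ij_nonzero : dot n (proj blk i j a) (proj blk i j a) <> 0.

Lemma rcd_direction_support k :
  inpair blk i j k = false -> rcd_direction n blk g L a x i j k = 0.
Proof. intros Hk. unfold rcd_direction, proj. rewrite Hk. ring. Qed.

Lemma rcd_direction_feasible : dot n a (rcd_direction n blk g L a x i j) = 0.
Proof.
  unfold rcd_direction, dot at 1.
  set (gp := proj blk i j (g x)). set (ap := proj blk i j a).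
  set (c := dot n ap gp / dot n ap ap).
  rewrite (fsum_ext n _ (fun k => (- / L i j) * (a k * gp k) + (/ L i j * c) * (a k * ap k)))
    by (intros; ring).
  rewrite fsum_lin2. fold (dot n a gp) (dot n a ap).
  unfold c, gp, ap. rewrite !dot_proj_both, !dot_proj_r.
  rewrite dot_proj_both in a_ij_nonzero. unfold Rdiv.
  rewrite (Rmult_assoc (/ L i j)), Rmult_assoc, Rinv_l by exact a_ij_nonzero. ring.
Qed.

Lemma rcd_step_feasible : dot n a (rcd_step n blk g L a x i j) = dot n a x.
Proof.
  rewrite rcd_step_direction. unfold vadd, dot at 1.
  rewrite (fsum_ext n _ (fun k => a k * x k + a k * rcd_direction n blk g L a x i j k))
    by (intros; ring).
  rewrite fsum_add. fold (dot n a x) (dot n a (rcd_direction n blk g L a x i j)).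
  rewrite rcd_direction_feasible. ring.
Qed.

Lemma rcd_direction_inner :
  dot n (g x) (rcd_direction n blk g L a x i j)
  = - / L i j * quad n (Qij n blk a i j) (g x).
Proof.
  rewrite quad_Qij by exact a_ij_nonzero. unfold rcd_direction, dot at 1.
  set (gp := proj blk i j (g x)). set (ap := proj blk i j a).
  set (c := dot n ap gp / dot n ap ap).
  rewrite (fsum_ext n _ (fun k => (- / L i j) * (g x k * gp k) + (/ L i j * c) * (g x k * ap k)))
    by (intros; ring).
  rewrite fsum_lin2. fold (dot n (g x) gp) (dot n (g x) ap).
  unfold c, gp, ap. rewrite dot_proj_r, !dot_proj_both, (dot_sym n (g x) (proj blk i j a)).
  unfold Rdiv. ring.
Qed.

Lemma rcd_direction_sq :
  dot n (rcd_direction n blk g L a x i j) (rcd_direction n blk g L a x i j)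
  = / L i j * / L i j * quad n (Qij n blk a i j) (g x).
Proof.
  rewrite quad_Qij by exact a_ij_nonzero. unfold rcd_direction, dot at 1.
  set (gp := proj blk i j (g x)). set (ap := proj blk i j a).
  set (c := dot n ap gp / dot n ap ap).
  rewrite (fsum_ext n _ (fun k => (/ L i j * / L i j) * (gp k * gp k)
        + (-2 * / L i j * / L i j * c) * (gp k * ap k) + (/ L i j * / L i j * c * c) * (ap k * ap k)))
    by (intros; ring).
  rewrite fsum_lin3. fold (dot n gp gp) (dot n gp ap) (dot n ap ap).
  rewrite (dot_sym n gp ap).
  transitivity (/ L i j * / L i j
                * (dot n gp gp - 2 * c * dot n ap gp + c * c * dot n ap ap)); [ring|].
  f_equal. unfold c, gp, ap.
  rewrite (dot_proj_both n blk i j (g x) (g x)), (dot_proj_both n blk i j a (g x)).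
  field. exact a_ij_nonzero.
Qed.

Lemma rcd_step_decrease :
  assumption_A2i n N blk f g L -> (i < N)%nat -> (j < N)%nat -> i <> j ->
  f (rcd_step n blk g L a x i j)
  <= f x - / (2 * L i j) * quad n (Qij n blk a i j) (perp n g a x).
Proof.
  intros [Hg [HL Hlip]] Hi Hj Hij.
  destruct (HL i j Hi Hj Hij) as [_ HLpos].
  assert (Hseg : forall t, 0 <= t <= 1 ->
    norm n (proj blk i j (vsub (g (fun k => x k + t * rcd_direction n blk g L a x i j k)) (g x)))
    <= L i j * (t * norm n (rcd_direction n blk g L a x i j))).
  { intros t Ht.
    replace (t * norm n (rcd_direction n blk g L a x i j))
      with (norm n (fun k => t * rcd_direction n blk g L a x i j k))
      by (rewrite norm_scal, Rabs_pos_eq; lra).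
    apply (Hlip i j Hi Hj Hij x (fun k => t * rcd_direction n blk g L a x i j k)).
    intros k Hk. rewrite rcd_direction_support by exact Hk. ring. }
  pose proof (block_descent n blk f g (L i j) i j x _ Hg rcd_direction_support Hseg) as Hdesc.
  rewrite <- rcd_step_direction, rcd_direction_inner, rcd_direction_sq in Hdesc.
  unfold perp. rewrite quad_Qij_shift by exact a_ij_nonzero.
  replace (L i j / 2 * (/ L i j * / L i j * quad n (Qij n blk a i j) (g x)))
    with (/ (2 * L i j) * quad n (Qij n blk a i j) (g x)) in Hdesc by (field; lra).
  replace (- / L i j * quad n (Qij n blk a i j) (g x))
    with (- (2 * / (2 * L i j) * quad n (Qij n blk a i j) (g x))) in Hdesc by (field; lra).
  lra.
Qed.

End OneStep.

Definition pair_weight (p L : nat -> nat -> R) (i j : nat) : R :=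
  if Nat.eqb i j then 0 else p i j / L i j.

Section Qmatrix.

Variables (n N : nat) (blk : nat -> nat) (a : vec) (p L : nat -> nat -> R).

Lemma Qmat_apply v k :
  fsum n (fun l => Qmat n N blk a p L k l * v l) =
  fsum N (fun i => fsum N (fun j =>
    pair_weight p L i j * fsum n (fun l => Qij n blk a i j k l * v l))).
Proof.
  transitivity (fsum n (fun l => fsum N (fun i => fsum N (fun j =>
    pair_weight p L i j * (Qij n blk a i j k l * v l))))).
  - apply fsum_ext; intros l _. unfold Qmat. rewrite fsum_mul_r.
    apply fsum_ext; intros i _. rewrite fsum_mul_r.
    apply fsum_ext; intros j _. unfold pair_weight. destruct (Nat.eqb i j); ring.
  - rewrite fsum_fsum2_swap. apply fsum_ext; intros i _. apply fsum_ext; intros j _.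
    apply fsum_scal.
Qed.

Lemma quad_Qmat v :
  quad n (Qmat n N blk a p L) v =
  fsum N (fun i => fsum N (fun j => pair_weight p L i j * quad n (Qij n blk a i j) v)).
Proof.
  unfold quad.
  transitivity (fsum n (fun k => fsum N (fun i => fsum N (fun j =>
    pair_weight p L i j * (v k * fsum n (fun l => Qij n blk a i j k l * v l)))))).
  - apply fsum_ext; intros k _. rewrite Qmat_apply, <- fsum2_scal.
    apply fsum_ext; intros i _. apply fsum_ext; intros j _. ring.
  - rewrite fsum_fsum2_swap. apply fsum_ext; intros i _. apply fsum_ext; intros j _.
    apply fsum_scal.
Qed.

Lemma Qmat_kernel k :
  (k < n)%nat ->
  (forall i j, (i < N)%nat -> (j < N)%nat -> i <> j ->
     dot n (proj blk i j a) (proj blk i j a) <> 0) ->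
  fsum n (fun l => Qmat n N blk a p L k l * a l) = 0.
Proof.
  intros Hk HD. rewrite Qmat_apply.
  apply fsum_zero; intros i Hi. apply fsum_zero; intros j Hj.
  unfold pair_weight. destruct (Nat.eqb_spec i j) as [|Hij]; [ring|].
  rewrite Qij_kernel by auto. ring.
Qed.

End Qmatrix.

Lemma expected_decrease n N blk f g L a p x :
  assumption_A2i n N blk f g L ->
  (forall i j, (i < N)%nat -> (j < N)%nat -> i <> j ->
     dot n (proj blk i j a) (proj blk i j a) <> 0) ->
  (forall i j, (i < N)%nat -> (j < N)%nat -> 0 <= p i j) ->
  fsum N (fun i => fsum N (fun j => p i j)) = 1 ->
  (forall i, (i < N)%nat -> p i i = 0) ->
  fsum N (fun i => fsum N (fun j => p i j * f (rcd_step n blk g L a x i j)))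
  <= f x - / 2 * quad n (Qmat n N blk a p L) (perp n g a x).
Proof.
  intros HA HD Hp0 Hpsum Hpii.
  rewrite quad_Qmat.
  transitivity (fsum N (fun i => fsum N (fun j =>
    f x * p i j + (- / 2) * (pair_weight p L i j * quad n (Qij n blk a i j) (perp n g a x))))).
  - apply fsum2_le. intros i j Hi Hj. unfold pair_weight.
    destruct (Nat.eqb_spec i j) as [<-|Hij].
    + rewrite Hpii by exact Hi. lra.
    + pose proof (rcd_step_decrease n N blk f g L a i j x (HD i j Hi Hj Hij) HA Hi Hj Hij).
      destruct HA as [_ [HL _]]. destruct (HL i j Hi Hj Hij) as [_ HLpos].
      apply Rle_trans with
        (p i j * (f x - / (2 * L i j) * quad n (Qij n blk a i j) (perp n g a x))).
      * apply Rmult_le_compat_l; auto.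
      * right. field. lra.
  - rewrite fsum2_lin2, Hpsum. lra.
Qed.

(* The one fact of linear algebra not proved by hand: n orthonormal vectors
   of R^n form a complete system, because for the square matrix W with rows
   V_0, ..., V_{n-1}, W W^T = 1 implies W^T W = 1. *)
Module OrthonormalBasis.
Import ssreflect ssrfun ssrbool eqtype ssrnat fintype bigop ssralg matrix Rstruct.
Import GRing.Theory.
Local Open Scope ring_scope.

Lemma fsum_bigop n (F : nat -> R) : fsum n F = \sum_(i < n) F i.
Proof.
elim: n => [|n IH]; first by rewrite big_ord0.
by rewrite big_ord_recr /= IH.
Qed.

Lemma kronecker_ord n (i j : 'I_n) :
  (if Nat.eqb i j then 1 else 0) = (i == j)%:R :> R.
Proof.
case: (PeanoNat.Nat.eqb_spec i j) => [e|ne].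
- by have -> : i == j by apply/eqP; apply: val_inj.
- by have -> : (i == j) = false by apply/eqP => e; apply: ne; rewrite e.
Qed.

Lemma columns_orthonormal n (V : nat -> vec) :
  (forall m m', (m < n)%coq_nat -> (m' < n)%coq_nat ->
     dot n (V m) (V m') = if Nat.eqb m m' then 1 else 0) ->
  forall k l, (k < n)%coq_nat -> (l < n)%coq_nat ->
    fsum n (fun m => V m k * V m l) = if Nat.eqb k l then 1 else 0.
Proof.
move=> Horth k l /ltP hk /ltP hl.
pose W : 'M[R]_n := \matrix_(i, j) V i j.
have WWt : W *m W^T = 1%:M.
  apply/matrixP => i j; rewrite !mxE -kronecker_ord -Horth; try exact/ltP.
  by rewrite /dot fsum_bigop; apply: eq_bigr => t _; rewrite !mxE.
have := mulmx1C WWt => /matrixP /(_ (Ordinal hk) (Ordinal hl)).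
rewrite !mxE -(kronecker_ord _ (Ordinal hk) (Ordinal hl)) /= => <-.
by rewrite fsum_bigop; apply: eq_bigr => t _; rewrite !mxE.
Qed.

End OrthonormalBasis.

Lemma orthonormal_complete n (V : nat -> vec) :
  (forall m m', (m < n)%nat -> (m' < n)%nat ->
     dot n (V m) (V m') = if Nat.eqb m m' then 1 else 0) ->
  forall k l, (k < n)%nat -> (l < n)%nat ->
    fsum n (fun m => V m k * V m l) = if Nat.eqb k l then 1 else 0.
Proof. exact (@OrthonormalBasis.columns_orthonormal n V). Qed.

Section EigenBasis.

Variables (n : nat) (M : nat -> nat -> R) (lam : nat -> R) (V : nat -> vec).

Hypothesis orthonormal : forall m m', (m < n)%nat -> (m' < n)%nat ->
  dot n (V m) (V m') = if Nat.eqb m m' then 1 else 0.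

Hypothesis eigen : forall m k, (m < n)%nat -> (k < n)%nat ->
  fsum n (fun l => M k l * V m l) = lam m * V m k.

Definition coord (u : vec) (m : nat) : R := dot n (V m) u.

Lemma eigen_expansion u k : (k < n)%nat -> u k = fsum n (fun m => coord u m * V m k).
Proof.
  intros Hk. unfold coord, dot.
  transitivity (fsum n (fun l => if Nat.eqb k l then u l else 0)); [now rewrite fsum_delta|].
  transitivity (fsum n (fun l => u l * fsum n (fun m => V m l * V m k))).
  - apply fsum_ext; intros l Hl.
    rewrite orthonormal_complete, (Nat.eqb_sym l k) by auto.
    destruct (Nat.eqb k l); ring.
  - transitivity (fsum n (fun l => fsum n (fun m => V m l * u l * V m k))).
    + apply fsum_ext; intros l _. rewrite <- fsum_scal. apply fsum_ext; intros; ring.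
    + rewrite fsum_swap. apply fsum_ext; intros m _. now rewrite fsum_mul_r.
Qed.

Lemma parseval w u : dot n w u = fsum n (fun m => coord w m * coord u m).
Proof.
  unfold dot at 1.
  rewrite (fsum_ext n (fun k => w k * u k) (fun k => fsum n (fun m => coord u m * (V m k * w k)))).
  - rewrite fsum_swap. apply fsum_ext; intros m _. rewrite fsum_scal. unfold coord, dot. ring.
  - intros k Hk. rewrite (eigen_expansion u k Hk), Rmult_comm, fsum_mul_r.
    apply fsum_ext; intros; ring.
Qed.

Lemma eigen_action u k : (k < n)%nat ->
  fsum n (fun l => M k l * u l) = fsum n (fun m => coord u m * (lam m * V m k)).
Proof.
  intros Hk.
  rewrite (fsum_ext n (fun l => M k l * u l) (fun l => fsum n (fun m => coord u m * (M k l * V m l)))).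
  - rewrite fsum_swap. apply fsum_ext; intros m Hm. rewrite fsum_scal, eigen; auto.
  - intros l Hl. rewrite (eigen_expansion u l Hl) at 1. rewrite <- fsum_scal.
    apply fsum_ext; intros; ring.
Qed.

Lemma quad_eigen u : quad n M u = fsum n (fun m => lam m * (coord u m * coord u m)).
Proof.
  unfold quad.
  rewrite (fsum_ext n _ (fun k => fsum n (fun m => (coord u m * lam m) * (V m k * u k)))).
  - rewrite fsum_swap. apply fsum_ext; intros m _. rewrite fsum_scal. unfold coord, dot. ring.
  - intros k Hk. rewrite eigen_action, Rmult_comm, fsum_mul_r by exact Hk.
    apply fsum_ext; intros; ring.
Qed.

Lemma coord_action u m : (m < n)%nat ->
  dot n (V m) (fun k => fsum n (fun l => M k l * u l)) = lam m * coord u m.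
Proof.
  intros Hm. unfold dot at 1.
  rewrite (fsum_ext n _ (fun k => fsum n (fun m' => (coord u m' * lam m') * (V m k * V m' k)))).
  - rewrite fsum_swap.
    rewrite (fsum_ext n _ (fun m' => if Nat.eqb m m' then coord u m' * lam m' else 0)).
    + rewrite fsum_delta by exact Hm. ring.
    + intros m' Hm'. rewrite fsum_scal. fold (dot n (V m) (V m')).
      rewrite orthonormal by auto. destruct (Nat.eqb m m'); ring.
  - intros k Hk. rewrite eigen_action by exact Hk. rewrite <- fsum_scal.
    apply fsum_ext; intros; ring.
Qed.

(* If the eigenvalues are sorted, lam_1 > 0 and M a = 0 with a <> 0, then
   M is bounded below by lam_1 on the orthogonal complement of a: the
   coordinates of a vanish except the one on V_0, hence so does the V_0
   coordinate of any v orthogonal to a. *)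
Lemma rayleigh_on_complement a v :
  (forall m m', (m <= m')%nat -> (m' < n)%nat -> lam m <= lam m') ->
  0 < lam 1%nat ->
  (exists k, (k < n)%nat /\ a k <> 0) ->
  (forall k, (k < n)%nat -> fsum n (fun l => M k l * a l) = 0) ->
  dot n a v = 0 ->
  lam 1%nat * dot n v v <= quad n M v.
Proof.
  intros Hsort Hlam1 [k0 [Hk0 Hak0]] Hker Hav.
  assert (Ha_high : forall m, (1 <= m)%nat -> (m < n)%nat -> coord a m = 0).
  { intros m H1 Hm.
    assert (Hz : lam m * coord a m = 0).
    { rewrite <- coord_action by exact Hm. apply fsum_zero; intros k Hk.
      rewrite Hker by exact Hk. ring. }
    pose proof (Hsort 1%nat m H1 Hm).
    destruct (Rmult_integral _ _ Hz); [lra | assumption]. }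
  assert (Ha_low : coord a 0 <> 0).
  { intros H0. apply Hak0. rewrite (eigen_expansion a k0 Hk0).
    apply fsum_zero. intros [|m] Hm; [rewrite H0 | rewrite Ha_high by lia]; ring. }
  assert (Hv_low : coord v 0 = 0).
  { rewrite parseval in Hav.
    rewrite (fsum_ext n _ (fun m => if Nat.eqb 0 m then coord a m * coord v m else 0))
      in Hav.
    - rewrite fsum_delta in Hav by lia.
      destruct (Rmult_integral _ _ Hav); [contradiction | assumption].
    - intros [|m] Hm; simpl; [reflexivity | rewrite Ha_high by lia; ring]. }
  rewrite quad_eigen, parseval, <- fsum_scal. apply fsum_le. intros [|m] Hm.
  - rewrite Hv_low. lra.
  - apply Rmult_le_compat_r; [apply Rle_0_sqr | apply Hsort; lia].
Qed.

End EigenBasis.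

Lemma second_eigenvalue_bound n M nu a v :
  second_smallest_eigenvalue n M nu -> 0 < nu ->
  (exists k, (k < n)%nat /\ a k <> 0) ->
  (forall k, (k < n)%nat -> fsum n (fun l => M k l * a l) = 0) ->
  dot n a v = 0 ->
  nu * dot n v v <= quad n M v.
Proof.
  intros [_ [lam [V [Horth [Heig [Hsort ->]]]]]] Hnu.
  now apply rayleigh_on_complement with (V := V).
Qed.

Lemma M3_sq n g a x : M3 n g a x ^ 2 = dot n (perp n g a x) (perp n g a x).
Proof. unfold M3, norm. simpl. rewrite Rmult_1_r, sqrt_sqrt by apply dot_nonneg. reflexivity. Qed.

Lemma perp_orthogonal n g a x : dot n a a <> 0 -> dot n a (perp n g a x) = 0.
Proof.
  intros Haa. unfold perp, dot at 1.
  rewrite (fsum_ext n _ (fun k => 1 * (a k * g x k) + (- (dot n a (g x) / dot n a a)) * (a k * a k)))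
    by (intros; ring).
  rewrite fsum_lin2. fold (dot n a (g x)) (dot n a a). field. exact Haa.
Qed.

Lemma expected_decrease_M3 n N blk f g L a p nu x :
  assumption_A2i n N blk f g L ->
  (exists k, (k < n)%nat /\ a k <> 0) ->
  (forall i j, (i < N)%nat -> (j < N)%nat -> i <> j ->
     dot n (proj blk i j a) (proj blk i j a) <> 0) ->
  (forall i j, (i < N)%nat -> (j < N)%nat -> 0 <= p i j) ->
  fsum N (fun i => fsum N (fun j => p i j)) = 1 ->
  (forall i, (i < N)%nat -> p i i = 0) ->
  second_smallest_eigenvalue n (Qmat n N blk a p L) nu -> 0 < nu ->
  fsum N (fun i => fsum N (fun j => p i j * f (rcd_step n blk g L a x i j)))
  <= f x - nu / 2 * M3 n g a x ^ 2.
Proof.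
  intros HA Ha HD Hp0 Hpsum Hpii Heig Hnu.
  assert (Haa : dot n a a <> 0).
  { destruct Ha as [k [Hk Hak]]. apply Rgt_not_eq, (dot_pos n a k Hk Hak). }
  pose proof (expected_decrease n N blk f g L a p x HA HD Hp0 Hpsum Hpii).
  pose proof (second_eigenvalue_bound n _ nu a (perp n g a x) Heig Hnu Ha
                (fun k Hk => Qmat_kernel n N blk a p L k Hk HD) (perp_orthogonal n g a x Haa)).
  rewrite M3_sq. lra.
Qed.

Lemma expected_telescoping n N blk f g L a b p fstar G c :
  (forall x, dot n a x = b ->
     fsum N (fun i => fsum N (fun j => p i j * f (rcd_step n blk g L a x i j)))
     <= f x - c * G x) ->
  (forall x i j, (i < N)%nat -> (j < N)%nat -> i <> j ->
     dot n a (rcd_step n blk g L a x i j) = dot n a x) ->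
  (forall x, dot n a x = b -> fstar <= f x) ->
  (forall i j, (i < N)%nat -> (j < N)%nat -> 0 <= p i j) ->
  fsum N (fun i => fsum N (fun j => p i j)) = 1 ->
  (forall i, (i < N)%nat -> p i i = 0) ->
  forall K x, dot n a x = b ->
    c * fsum K (fun l => expect n N blk g L a p l G x) <= f x - fstar.
Proof.
  intros Hdec Hfeas Hlow Hp0 Hpsum Hpii K.
  induction K as [|K IH]; intros x Hx.
  - simpl. pose proof (Hlow x Hx). lra.
  - rewrite fsum_shift. simpl expect.
    rewrite fsum_fsum2_swap, Rmult_plus_distr_l, <- fsum2_scal.
    assert (Hnext : fsum N (fun i => fsum N (fun j =>
               c * fsum K (fun l => p i j * expect n N blk g L a p l G (rcd_step n blk g L a x i j))))
            <= fsum N (fun i => fsum N (fun j =>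
               1 * (p i j * f (rcd_step n blk g L a x i j)) + (- fstar) * p i j))).
    { apply fsum2_le. intros i j Hi Hj. rewrite fsum_scal.
      destruct (Nat.eq_dec i j) as [<-|Hij].
      - rewrite Hpii by exact Hi. lra.
      - pose proof (IH (rcd_step n blk g L a x i j)
                      ltac:(rewrite Hfeas by assumption; exact Hx)).
        pose proof (Hp0 i j Hi Hj).
        replace (c * (p i j * fsum K (fun l => expect n N blk g L a p l G (rcd_step n blk g L a x i j))))
          with (p i j * (c * fsum K (fun l => expect n N blk g L a p l G (rcd_step n blk g L a x i j))))
          by ring.
        replace (1 * (p i j * f (rcd_step n blk g L a x i j)) + - fstar * p i j)
          with (p i j * (f (rcd_step n blk g L a x i j) - fstar)) by ring.
        now apply Rmult_le_compat_l. }
    rewrite fsum2_lin2, Hpsum in Hnext. pose proof (Hdec x Hx). lra.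
Qed.

Theorem theorem5
  (n N : nat) (blk : nat -> nat)
  (f : vec -> R) (g : vec -> vec) (L : nat -> nat -> R)
  (a : vec) (b : R) (x0 : vec) (fstar : R)
  (p : nat -> nat -> R) (nu : R) :
  block_structure n N blk ->
  assumption_A2i n N blk f g L ->
  (exists k, (k < n)%nat /\ a k <> 0) ->
  (forall i j, (i < N)%nat -> (j < N)%nat -> i <> j ->
     exists k, (k < n)%nat /\ inpair blk i j k = true /\ a k <> 0) ->
  (* f^* = inf { f x : a^T x = b } is finite *)
  (forall x, dot n a x = b -> fstar <= f x) ->
  (forall eps, 0 < eps -> exists x, dot n a x = b /\ f x < fstar + eps) ->
  (* probability distribution on ordered pairs *)
  (forall i j, (i < N)%nat -> (j < N)%nat -> 0 <= p i j) ->
  fsum N (fun i => fsum N (fun j => p i j)) = 1 ->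
  (forall i, (i < N)%nat -> p i i = 0) ->
  (forall i j, (i < N)%nat -> (j < N)%nat -> i <> j ->
     p i j = p j i /\ 0 < p i j) ->
  dot n a x0 = b ->
  second_smallest_eigenvalue n (Qmat n N blk a p L) nu ->
  0 < nu ->
  forall k : nat, exists l : nat, (l <= k)%nat /\
    expect n N blk g L a p l (fun x => (M3 n g a x) ^ 2) x0
      <= 2 * (f x0 - fstar) / (nu * INR (S k)).
Proof.
  intros _ HA Ha Hpair Hlow _ Hp0 Hpsum Hpii _ Hx0 Heig Hnu k.
  set (G := fun x => M3 n g a x ^ 2).
  assert (HD : forall i j, (i < N)%nat -> (j < N)%nat -> i <> j ->
            dot n (proj blk i j a) (proj blk i j a) <> 0).
  { intros i j Hi Hj Hij. destruct (Hpair i j Hi Hj Hij) as [k0 [Hk0 [Hin Hak]]].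
    apply Rgt_not_eq, (dot_pos n _ k0 Hk0). unfold proj. now rewrite Hin. }
  assert (Hsum : nu / 2 * fsum (S k) (fun l => expect n N blk g L a p l G x0) <= f x0 - fstar).
  { apply (expected_telescoping n N blk f g L a b p fstar G (nu / 2)); auto.
    - intros x _. now apply expected_decrease_M3.
    - intros x i j Hi Hj Hij. apply rcd_step_feasible, HD; auto. }
  destruct (exists_argmin (fun l => expect n N blk g L a p l G x0) k) as [l [Hl Hmin]].
  exists l. split; [exact Hl|].
  pose proof (fsum_ge_min (S k) (fun l => expect n N blk g L a p l G x0) l
                (fun l' Hl' => Hmin l' ltac:(lia))) as Havg.
  assert (Hk : 0 < INR (S k)) by (apply lt_0_INR; lia).
  apply Rmult_le_reg_l with (nu / 2 * INR (S k)); [apply Rmult_lt_0_compat; lra|].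
  replace (nu / 2 * INR (S k) * (2 * (f x0 - fstar) / (nu * INR (S k)))) with (f x0 - fstar)
    by (field; lra).
  fold G. nra.
Qed.
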